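(* Let $\textsc{mix}$ be a nice mixture with parameter space $\mathcal{W}\subset\mathbb{R}^m$ and constant $a>0$ (as in the context). Let $b>1$ and set the step size $\alpha = 2(1-b^{-1})/a$. Then for every $n\ge 1$, every sequence $x^n=x_1\dots x_n$ over $\mathcal{X}$, every sequence $\mathbf{P}^n=\mathbf{P}_1,\dots,\mathbf{P}_n$ of probability matrices over $\mathcal{P}_+$ and every initial weight vector $\mathbf{w}_1\in\mathcal{W}$, $$\ell(x^n,\textsc{mix-ogd}(\mathbf{w}_1,\alpha,x^n,\mathbf{P}^n)) \le b\cdot \ell^*(x^n,\mathbf{P}^n,\textsc{mix}) + \frac{a}{4}\,\frac{b^2}{b-1}\,\lvert \mathbf{w}_1-\mathbf{w}^*\rvert^2,$$ where $\mathbf{w}^*\in\mathcal{W}$ is a minimizer of $\mathbf{w}\mapsto \ell(x^n,\mathbf{P}^n,\mathbf{w},\textsc{mix})$ over $\mathcal{W}$.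
   Context: Let $\mathcal{X}=\{1,\dots,N\}$ with $1<N<\infty$, and let $\mathcal{P}_+$ be the set of probability distributions on $\mathcal{X}$ assigning positive probability to every letter. Fix $m>1$. A probability matrix over $\mathcal{P}_+$ is $\mathbf{P}=(\mathbf{p}(1)\ \cdots\ \mathbf{p}(N))$ where $p_1,\dots,p_m\in\mathcal{P}_+$ and $\mathbf{p}(x)=(p_1(x),\dots,p_m(x))^{\mathsf T}$. For $p\in\mathcal{P}_+$ and $x\in\mathcal{X}$, $\ell(x,p):=-\log_2 p(x)$. A mixture $\textsc{mix}$ with parameter space $\mathcal{W}\subseteq\mathbb{R}^m$ maps $(\mathbf{w},\mathbf{P})$ with $\mathbf{w}\in\mathcal{W}$ to a distribution $\textsc{mix}(\mathbf{w},\mathbf{P})\in\mathcal{P}_+$. It is called nice if: (1) $\mathcal{W}$ is a non-empty, compact, convex subset of $\mathbb{R}^m$; (2) $\mathbf{w}\mapsto\ell(x,\textsc{mix}(\mathbf{w},\mathbf{P}))$ is convex on $\mathcal{W}$ for all $\mathbf{P}$ over $\mathcal{P}_+$ and all $x\in\mathcal{X}$; (3) it is differentiable in $\mathbf{w}$ for all such $\mathbf{P},x$; (4) there is a constant $a>0$ with $\lvert\nabla_{\mathbf{w}}\ell(x,\textsc{mix}(\mathbf{w},\mathbf{P}))\rvert^2\le a\,\ell(x,\textsc{mix}(\mathbf{w},\mathbf{P}))$ for all $\mathbf{w}\in\mathcal{W}$, all $\mathbf{P}$ over $\mathcal{P}_+$ and all $x\in\mathcal{X}$ ($\lvert\cdot\rvert$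 is the Euclidean norm). Algorithm $\textsc{mix-ogd}(\mathbf{w}_1,\alpha,x^n,\mathbf{P}^n)$: given $\mathbf{w}_1\in\mathcal{W}$, for $k=1,\dots,n$ it codes $x_k$ with $\ell(x_k,\textsc{mix}(\mathbf{w}_k,\mathbf{P}_k))$ bits and sets $\mathbf{w}_{k+1}=\mathrm{proj}\big(\mathbf{w}_k-\alpha\nabla_{\mathbf{w}}\ell(x_k,\textsc{mix}(\mathbf{w},\mathbf{P}_k))|_{\mathbf{w}=\mathbf{w}_k};\mathcal{W}\big)$, where $\mathrm{proj}(\mathbf{v};\mathcal{W})=\arg\min_{\mathbf{w}\in\mathcal{W}}\lvert\mathbf{v}-\mathbf{w}\rvert^2$. Its total code length is $\ell(x^n,\textsc{mix-ogd}(\mathbf{w}_1,\alpha,x^n,\mathbf{P}^n)):=\sum_{k=1}^n\ell(x_k,\textsc{mix}(\mathbf{w}_k,\mathbf{P}_k))$. Also $\ell(x^n,\mathbf{P}^n,\mathbf{w},\textsc{mix}):=\sum_{k=1}^n\ell(x_k,\textsc{mix}(\mathbf{w},\mathbf{P}_k))$ and $\ell^*(x^n,\mathbf{P}^n,\textsc{mix}):=\min_{\mathbf{w}\in\mathcal{W}}\ell(x^n,\mathbf{P}^n,\mathbf{w},\textsc{mix})$. *)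

From HB Require Import structures.
From mathcomp Require Import all_boot all_order all_algebra.
From mathcomp Require Import all_classical all_reals all_analysis.
Set Implicit Arguments. Unset Strict Implicit. Unset Printing Implicit Defensive.
Import Order.TTheory GRing.Theory Num.Theory.
Import numFieldNormedType.Exports.
Local Open Scope classical_set_scope.
Local Open Scope ring_scope.

Section Defs.
Variable R : realType.

Definition sqnorm (m : nat) (v : 'rV[R]_m) : R := \sum_(i < m) (v 0 i) ^+ 2.

(* p in P_+ : a probability distribution on X = 'I_N with all entries positive *)
Definition pos_dist (N : nat) (p : 'rV[R]_N) : Prop :=
  (forall x, 0 < p 0 x) /\ \sum_(x < N) p 0 x = 1.

Definition prob_matrix (m N : nat) (P : 'M[R]_(m, N)) : Prop :=
  forall i, pos_dist (row i P).

Definition ell (N : nat) (x : 'I_N) (p : 'rV[R]_N) : R := - (ln (p 0 x) / ln 2).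

Definition grad (m : nat) (f : 'rV[R]_m -> R) (w : 'rV[R]_m) : 'rV[R]_m :=
  \row_(i < m) ('D_(delta_mx 0 i) f w).

Definition convex_set (m : nat) (W : set 'rV[R]_m) : Prop :=
  forall u v t, W u -> W v -> 0 <= t <= 1 -> W (t *: u + (1 - t) *: v).

Definition convex_fun_on (m : nat) (W : set 'rV[R]_m) (f : 'rV[R]_m -> R) : Prop :=
  forall u v t, W u -> W v -> 0 <= t <= 1 ->
    f (t *: u + (1 - t) *: v) <= t * f u + (1 - t) * f v.

(* The mixture is a
   function mix : R^m -> (probability matrices) -> distributions; only its
   values on W matter except that differentiability is taken in R^m at the
   points of W. *)
Definition nice_mixture (m N : nat) (W : set 'rV[R]_m)
    (mix : 'rV[R]_m -> 'M[R]_(m, N) -> 'rV[R]_N) (a : R) : Prop :=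
  [/\
      (forall w P, W w -> prob_matrix P -> pos_dist (mix w P)),
      W !=set0 /\ compact W /\ convex_set W,
      (forall P x, prob_matrix P -> convex_fun_on W (fun w => ell x (mix w P))),
      (forall P x w, prob_matrix P -> W w -> differentiable (fun w => ell x (mix w P)) w)
    & 0 < a /\
      (forall P x w, prob_matrix P -> W w ->
        sqnorm (grad (fun w => ell x (mix w P)) w) <= a * ell x (mix w P))].

(* Euclidean projection onto W: the argmin of |v - w|^2 over w in W
   (chosen by xget; unique for nonempty closed convex W) *)
Definition proj (m : nat) (W : set 'rV[R]_m) (v : 'rV[R]_m) : 'rV[R]_m :=
  xget 0 [set u | W u /\ forall u', W u' -> sqnorm (v - u) <= sqnorm (v - u')].

(* Weights of MIX-OGD: ogd_w k = w_{k+1}; data x_k = x k, P_k = P k (k >= 1). *)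
Fixpoint ogd_w (m N : nat) (W : set 'rV[R]_m)
    (mix : 'rV[R]_m -> 'M[R]_(m, N) -> 'rV[R]_N)
    (w1 : 'rV[R]_m) (alpha : R) (x : nat -> 'I_N) (P : nat -> 'M[R]_(m, N))
    (k : nat) : 'rV[R]_m :=
  match k with
  | 0 => w1
  | k'.+1 =>
      let wk := ogd_w W mix w1 alpha x P k' in
      proj W (wk - alpha *: grad (fun w => ell (x k) (mix w (P k))) wk)
  end.

Definition ogd_codelength (m N : nat) (W : set 'rV[R]_m)
    (mix : 'rV[R]_m -> 'M[R]_(m, N) -> 'rV[R]_N)
    (w1 : 'rV[R]_m) (alpha : R) (n : nat) (x : nat -> 'I_N) (P : nat -> 'M[R]_(m, N)) : R :=
  \sum_(1 <= k < n.+1) ell (x k) (mix (ogd_w W mix w1 alpha x P k.-1) (P k)).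

Definition fixed_codelength (m N : nat)
    (mix : 'rV[R]_m -> 'M[R]_(m, N) -> 'rV[R]_N)
    (n : nat) (x : nat -> 'I_N) (P : nat -> 'M[R]_(m, N)) (w : 'rV[R]_m) : R :=
  \sum_(1 <= k < n.+1) ell (x k) (mix w (P k)).

End Defs.

(** Online gradient descent on the convex losses [f_k w = ell(x_k, mix(w, P_k))].
    For a comparator [w*] in [W], convexity gives
    [f_k w_k - f_k w* <= <g_k, w_k - w*>], and since projecting onto a convex
    set does not increase the distance to its points,
    [2 alpha <g_k, w_k - w*> <= |w_k - w*|^2 - |w_(k+1) - w*|^2 + alpha^2 |g_k|^2].
    The self-bounding property [|g_k|^2 <= a f_k w_k] and the choice
    [alpha = 2 (1 - 1/b) / a] absorb the last term, leaving
    [f_k w_k <= b f_k w* + (b / (2 alpha)) (|w_k - w*|^2 - |w_(k+1) - w*|^2)],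
    which telescopes over [k = 1..n]; note [b / (2 alpha) = a b^2 / (4 (b - 1))]. *)
From Pilot Require Import Defs.
From HB Require Import structures.
From mathcomp Require Import all_boot all_order all_algebra.
From mathcomp Require Import all_classical all_reals all_analysis.
From mathcomp Require Import ring lra.
Import Order.TTheory GRing.Theory Num.Theory.
Import numFieldNormedType.Exports.
Set Implicit Arguments. Unset Strict Implicit. Unset Printing Implicit Defensive.
Local Open Scope classical_set_scope.
Local Open Scope ring_scope.

Section EuclideanGeometry.
Variables (R : realType) (m : nat).
Implicit Types (u v w : 'rV[R]_m) (W : set 'rV[R]_m).

Definition dotv u v : R := \sum_(i < m) u 0 i * v 0 i.

Lemma dotvC u v : dotv u v = dotv v u.
Proof. by apply: eq_bigr => i _; rewrite mulrC. Qed.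

Lemma dotvN u v : dotv u (- v) = - dotv u v.
Proof. by rewrite /dotv -sumrN; apply: eq_bigr => i _; rewrite !mxE mulrN. Qed.

Lemma sqnorm_ge0 u : 0 <= sqnorm u.
Proof. by apply: sumr_ge0 => i _; rewrite sqr_ge0. Qed.

Lemma sqnormN u : sqnorm (- u) = sqnorm u.
Proof. by apply: eq_bigr => i _; rewrite !mxE sqrrN. Qed.

Lemma sqnormBZ u v t :
  sqnorm (u - t *: v) = sqnorm u - 2 * t * dotv u v + t ^+ 2 * sqnorm v.
Proof.
rewrite /sqnorm /dotv mulr_sumr [t ^+ 2 * _]mulr_sumr -sumrB -big_split /=.
by apply: eq_bigr => i _; rewrite !mxE; ring.
Qed.

Lemma sqnormB u v : sqnorm (u - v) = sqnorm u - 2 * dotv u v + sqnorm v.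
Proof. by have := sqnormBZ u v 1; rewrite scale1r mulr1 expr1n mul1r. Qed.

Lemma continuous_sqnorm_sub v : continuous (fun u => sqnorm (v - u)).
Proof.
apply: (@continuous_big _ _ +%R 0 xpredT) => //; first exact: add_continuous.
move=> i _ u0.
have -> : (fun u : 'rV[R]_m => (v - u) 0 i ^+ 2) =
    (cst (v 0 i) - (fun u : 'rV[R]_m => u 0 i)) \*
    (cst (v 0 i) - (fun u : 'rV[R]_m => u 0 i)).
  by apply: funext => u /=; rewrite !mxE expr2.
have coord_cvg : (cst (v 0 i) - (fun u : 'rV[R]_m => u 0 i)) @ u0 -->
    v 0 i - u0 0 i.
  by apply: (@cvgB _ _ _ (nbhs u0)); [exact: cvg_cst | exact: coord_continuous].
exact: (@cvgM _ _ (nbhs u0) _ _ _ _ _ coord_cvg coord_cvg).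
Qed.

Lemma projP W v : W !=set0 -> compact W ->
  W (Defs.proj W v) /\ forall w, W w -> sqnorm (v - Defs.proj W v) <= sqnorm (v - w).
Proof.
move=> W0 cW.
have cont : {within W, continuous (fun u => sqnorm (v - u))}.
  by apply: continuous_subspaceT; exact: continuous_sqnorm_sub.
have [c Wc cmin] := compact_EVT_min W0 cW cont.
apply: (@xgetPex _ 0 [set u | W u /\ forall w, W w -> sqnorm (v - u) <= sqnorm (v - w)]).
exists c; split; first by rewrite inE in Wc.
by move=> w Ww; apply: cmin; rewrite inE.
Qed.

Section ConvexProjection.
Variable W : set 'rV[R]_m.
Hypotheses (W0 : W !=set0) (cW : compact W) (cvW : Defs.convex_set W).

(* With [u = proj W v], minimality against the points [u + t (w - u)] of [W]
   gives [2 <v - u, w - u> <= t |w - u|^2] for all [t] in (0, 1]; the choice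
   [t = c / (c + s)] then excludes a positive [c]. *)
Lemma proj_obtuse v w : W w -> dotv (v - Defs.proj W v) (w - Defs.proj W v) <= 0.
Proof.
move=> Ww; have [Wu umin] := projP v W0 cW; set u := Defs.proj W v in Wu umin *.
have small_t t : 0 < t <= 1 -> 2 * dotv (v - u) (w - u) <= t * sqnorm (w - u).
  move=> /andP[t0 t1].
  have := umin _ (cvW Ww Wu (_ : 0 <= t <= 1)); rewrite (ltW t0) t1 => /(_ isT).
  rewrite (_ : v - (t *: w + (1 - t) *: u) = (v - u) - t *: (w - u)); last first.
    by apply/matrixP => i j; rewrite !mxE; ring.
  rewrite sqnormBZ; nra.
set c := dotv _ _; set s := sqnorm (w - u).
have s0 : 0 <= s by exact: sqnorm_ge0.
case: (leP c 0) => // c0; exfalso.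
have cs0 : 0 < c + s by lra.
have := small_t (c / (c + s)).
rewrite divr_gt0 //= ler_pdivrMr // mul1r.
have -> : (c <= c + s) = true by apply/idP; lra.
move=> /(_ isT); rewrite mulrAC ler_pdivlMr // -/c -/s => h.
have := mulr_ge0 (ltW c0) s0; nra.
Qed.

Lemma proj_sqnorm_le v w : W w -> sqnorm (Defs.proj W v - w) <= sqnorm (v - w).
Proof.
move=> Ww; have := proj_obtuse v Ww; set u := Defs.proj W v => obtuse.
rewrite (_ : v - w = (v - u) - (w - u)); last first.
  by apply/matrixP => i j; rewrite !mxE; ring.
rewrite [leRHS]sqnormB -[u - w]opprB sqnormN.
have := sqnorm_ge0 (v - u); lra.
Qed.

End ConvexProjection.

Lemma convex_grad_le W (f : 'rV[R]_m -> R) u v :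
  Defs.convex_fun_on W f -> W u -> W v -> differentiable f u ->
  dotv (grad f u) (v - u) <= f v - f u.
Proof.
move=> cf Wu Wv df.
have -> : dotv (grad f u) (v - u) = 'D_(v - u) f u.
  rewrite deriveE // [in RHS](row_sum_delta (v - u)) linear_sum.
  by apply: eq_bigr => i _; rewrite linearZ /= mxE -deriveE // mulrC.
have dd : derivable f u (v - u) by exact: diff_derivable.
rewrite /derive cvg_at_rightE //.
apply: limr_le.
  by apply: cvgP; apply: cvg_dnbhs_at_right; exact: dd.
near=> h.
have h0 : 0 < h by near: h; exact: nbhs_right_gt.
have h1 : h < 1 by near: h; exact: nbhs_right_lt.
have := cf _ _ h Wv Wu; rewrite (ltW h0) (ltW h1) => /(_ isT).
rewrite (_ : h *: v + (1 - h) *: u = h *: (v - u) + u); last first.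
  by apply/matrixP => i j; rewrite !mxE; ring.
move=> chord /=.
change (h^-1 * (f (h *: (v - u) + u) - f u) <= f v - f u).
rewrite mulrC ler_pdivrMr //; nra.
Unshelve. all: by end_near.
Qed.

End EuclideanGeometry.

Section GradientStep.
Variables (R : realType) (m : nat) (W : set 'rV[R]_m) (f : 'rV[R]_m -> R).
Variables (a b alpha : R).
Hypotheses (W0 : W !=set0) (cW : compact W) (cvW : Defs.convex_set W).
Hypotheses (cf : Defs.convex_fun_on W f) (a0 : 0 < a) (b0 : 0 < b).
Hypotheses (alpha0 : 0 < alpha) (alpha_a : alpha * a <= 2 * (1 - b^-1)).

Lemma gradient_step_bound w ws : W w -> W ws -> differentiable f w ->
  sqnorm (grad f w) <= a * f w ->
  f w <= b * f ws + b / (2 * alpha) *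
    (sqnorm (w - ws) - sqnorm (Defs.proj W (w - alpha *: grad f w) - ws)).
Proof.
move=> Ww Wws df self_bound; set g := grad f w.
have convex_gap := convex_grad_le cf Ww Wws df.
have := proj_sqnorm_le W0 cW cvW (w - alpha *: g) Wws.
rewrite (_ : w - alpha *: g - ws = (w - ws) - alpha *: g); last first.
  by apply/matrixP => i j; rewrite !mxE; ring.
have dot_flip : dotv (w - ws) g = - dotv g (ws - w).
  by rewrite dotvC -dotvN opprB.
rewrite sqnormBZ dot_flip.
set S := sqnorm (w - ws); set S' := sqnorm (Defs.proj W _ - ws) => dist_drop.
set F := f w in self_bound convex_gap *; set Fs := f ws in convex_gap *.
set d := dotv g (ws - w) in convex_gap dist_drop.
have F0 : 0 <= F.
  have aF0 := le_trans (sqnorm_ge0 g) self_bound.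
  by rewrite -(pmulr_rge0 _ a0).
have grad_term : alpha ^+ 2 * sqnorm g <= 2 * alpha * (1 - b^-1) * F.
  apply: (le_trans (ler_wpM2l (sqr_ge0 alpha) self_bound)).
  rewrite (_ : alpha ^+ 2 * (a * F) = alpha * (alpha * a * F)); last by ring.
  rewrite (_ : 2 * alpha * _ * F = alpha * (2 * (1 - b^-1) * F)); last by ring.
  by apply: ler_wpM2l; [exact: ltW | exact: ler_wpM2r].
have gap_term : 2 * alpha * (F - Fs) <= 2 * alpha * - d.
  by apply: ler_wpM2l; [rewrite mulr_ge0 // ltW | lra].
have progress : 2 * alpha * (b^-1 * F - Fs) <= S - S' by lra.
have -> : F = b * Fs + b / (2 * alpha) * (2 * alpha * (b^-1 * F - Fs)).
  by field; rewrite (gt_eqF b0) (gt_eqF alpha0).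
rewrite lerD2l; apply: ler_wpM2l progress.
by rewrite divr_ge0 ?mulr_ge0 // ltW.
Qed.

End GradientStep.

Lemma ogd_w_in (R : realType) (m N : nat) (W : set 'rV[R]_m)
    (mix : 'rV[R]_m -> 'M[R]_(m, N) -> 'rV[R]_N) w1 alpha x P k :
  W !=set0 -> compact W -> W w1 -> W (ogd_w W mix w1 alpha x P k).
Proof. by move=> W0 cW Ww1; case: k => [|k] //=; exact: (projP _ W0 cW).1. Qed.

Theorem proposition1 (R : realType) (N m : nat) (W : set 'rV[R]_m)
    (mix : 'rV[R]_m -> 'M[R]_(m, N) -> 'rV[R]_N) (a b : R) :
  (1 < N)%N -> (1 < m)%N ->
  nice_mixture W mix a ->
  1 < b ->
  forall (n : nat) (x : nat -> 'I_N) (P : nat -> 'M[R]_(m, N)) (w1 wstar : 'rV[R]_m),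
  (1 <= n)%N ->
  (forall k, (1 <= k <= n)%N -> prob_matrix (P k)) ->
  W w1 ->
  W wstar ->
  (forall w, W w -> fixed_codelength mix n x P wstar <= fixed_codelength mix n x P w) ->
  ogd_codelength W mix w1 (2 * (1 - b^-1) / a) n x P
    <= b * fixed_codelength mix n x P wstar
       + a / 4 * (b ^+ 2 / (b - 1)) * sqnorm (w1 - wstar).
Proof.
move=> _ _ [_ [W0 [cW cvW]] convex diff [a0 self_bound]] b1 n x P w1 ws _ HP Ww1 Wws _.
have b0 : 0 < b := lt_trans ltr01 b1.
set alpha := 2 * (1 - b^-1) / a; set v := ogd_w W mix w1 alpha x P.
have alpha0 : 0 < alpha by rewrite divr_gt0 // mulr_gt0 // subr_gt0 invf_lt1.
have alpha_a : alpha * a <= 2 * (1 - b^-1) by rewrite divfK ?gt_eqF.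
set D := fun k => sqnorm (v k - ws).
have step k : (1 <= k < n.+1)%N -> ell (x k) (mix (v k.-1) (P k)) <=
    b * ell (x k) (mix ws (P k)) + b / (2 * alpha) * (D k.-1 - D k).
  case: k => [//|k] /andP[_ kn]; have Wv := ogd_w_in mix alpha x P k W0 cW Ww1.
  have HPk : prob_matrix (P k.+1) by apply: HP; rewrite ltnS in kn; rewrite kn.
  rewrite /D /v /=.
  exact: gradient_step_bound W0 cW cvW (convex _ _ HPk) a0 b0 alpha0 alpha_a
    _ _ Wv Wws (diff _ _ _ HPk Wv) (self_bound _ _ _ HPk Wv).
apply: le_trans (ler_sum_nat step) _.
rewrite big_split /= -!mulr_sumr lerD2l.
rewrite (@telescope_sumr_eq _ 1 n.+1 (fun k => - D k.-1)) //=; last first.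
  by move=> k _ /=; rewrite opprK addrC.
have -> : a / 4 * (b ^+ 2 / (b - 1)) = b / (2 * alpha).
  by rewrite /alpha; field; rewrite (gt_eqF a0) (gt_eqF b0) subr_eq0 (gt_eqF b1).
apply: ler_wpM2l.
  by apply: divr_ge0; [exact: ltW | apply: mulr_ge0 => //; exact: ltW].
have := sqnorm_ge0 (v n - ws); rewrite /D /=; lra.
Qed.
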